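(* Let $\mathbb F$ be a field and define $P_n:=z^2\bigl(y\,\mathrm{HC}_n+y^2\,\mathrm{HC}_n^2\bigr)$, where $y,z$ are variables distinct from the variables of $\mathrm{HC}_n$. Then the $\mathsf p$-family $(P)=(P_n)_{n\in\mathbb N}$ does not lie in $\mathrm{VNPC}(\le_{\mathsf p})$.
   Context: A $\mathsf p$-family $(f)=(f_n)_{n\in\mathbb N}$ is a sequence of multivariate polynomials over $\mathbb F$ whose number of variables and degree are polynomially bounded in $n$. $f\le g$ (projection) means $f=g(\alpha_1,\dots,\alpha_M)$ where each $\alpha_i$ is a variable of $f$ or an element of $\mathbb F$; $(f)\le_{\mathsf p}(g)$ if there is a polynomially bounded $t$ with $f_n\le g_{t(n)}$ for all $n$. $\mathrm{HC}_n=\sum_{\pi}\prod_{i=1}^n x_{i,\pi(i)}$, summing over permutations $\pi$ of $\{1,\dots,n\}$ that are $n$-cycles. $\mathrm{VNP}$ is the set of $\mathsf p$-families $(f)$ with $(f)\le_{\mathsf p}(\mathrm{HC})$, and $\mathrm{VNPC}(\le_{\mathsf p})=\{(f)\in\mathrm{VNP}:(\mathrm{HC})\le_{\mathsf p}(f)\}$. *)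

From HB Require Import structures.
From mathcomp Require Import all_boot all_order all_algebra all_fingroup.
From mathcomp Require Import mpoly.
Set Implicit Arguments. Unset Strict Implicit. Unset Printing Implicit Defensive.
Import GRing.Theory.
Local Open Scope ring_scope.

Record polyseq_fam (F : fieldType) := PolyFam {
  nvars : nat -> nat;
  fpol : forall n : nat, {mpoly F[nvars n]} }.

Definition poly_bounded (t : nat -> nat) : Prop :=
  exists c : nat, forall n : nat, (t n <= n ^ c + c)%N.

(* p-family: number of variables and degree polynomially bounded.
   (msize p = 1 + total degree, or 0 for p = 0.) *)
Definition pfamily (F : fieldType) (f : polyseq_fam F) : Prop :=
  poly_bounded (nvars f) /\ poly_bounded (fun n => msize (fpol f n)).

Definition proj_subst (F : fieldType) (k m : nat) (a : 'I_m -> 'I_k + F)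
  : m.-tuple {mpoly F[k]} :=
  [tuple match a i with inl j => 'X_j | inr c => c%:MP end | i < m].

Definition is_projection (F : fieldType) (k m : nat)
  (f : {mpoly F[k]}) (g : {mpoly F[m]}) : Prop :=
  exists a : 'I_m -> 'I_k + F, f = g \mPo proj_subst a.

Definition p_reduces (F : fieldType) (f g : polyseq_fam F) : Prop :=
  exists t : nat -> nat, poly_bounded t /\
    forall n : nat, is_projection (fpol f n) (fpol g (t n)).

Definition ncycle (n : nat) (s : 'S_n) : bool :=
  [forall x : 'I_n, porbit s x == [set: 'I_n]].

(* HC_n in the n*n variables x_{i,j} = 'X_(mxvec_index i j) *)
Definition HC_poly (F : fieldType) (n : nat) : {mpoly F[n * n]} :=
  \sum_(s : 'S_n | ncycle s) \prod_(i < n) 'X_(mxvec_index i (s i)).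

Definition HC (F : fieldType) : polyseq_fam F :=
  @PolyFam F (fun n => n * n)%N (@HC_poly F).

Definition VNP (F : fieldType) (f : polyseq_fam F) : Prop :=
  pfamily f /\ p_reduces f (HC F).

Definition VNPC (F : fieldType) (f : polyseq_fam F) : Prop :=
  VNP f /\ p_reduces (HC F) f.

(* P_n = z^2 (y HC_n + y^2 HC_n^2), in n*n + 2 variables: the first n*n are
   those of HC_n, then y, then z. *)
Definition P_poly (F : fieldType) (n : nat) : {mpoly F[n * n + 2]} :=
  let hc := HC_poly F n \mPo [tuple ('X_(lshift 2 i) : {mpoly F[n * n + 2]}) | i < n * n] in
  let y : {mpoly F[n * n + 2]} := 'X_(rshift (n * n) (0 : 'I_2)) in
  let z : {mpoly F[n * n + 2]} := 'X_(rshift (n * n) (1 : 'I_2)) in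
  z ^+ 2 * (y * hc + y ^+ 2 * hc ^+ 2).

Definition Pfam (F : fieldType) : polyseq_fam F :=
  @PolyFam F (fun n => n * n + 2)%N (@P_poly F).

From HB Require Import structures.
From mathcomp Require Import all_boot all_order all_algebra all_fingroup.
From mathcomp Require Import mpoly.
Import GRing.Theory.
Local Open Scope ring_scope.

(* HC_1 is a single variable, so HC <=_p P would write that variable as a
   projection of some P_m.  Identifying all variables with one variable X maps
   the projected z to X or to a constant c, and the projected P_m to
   Z^2 (w + w^2).  Neither shape can be X: for Z = X the coefficient of X
   vanishes, and for Z = c the degree of c^2 (w + w^2) is 0 or 2 deg w. *)

Section VariableCollapse.
Variable F : fieldType.

Definition collapse {k : nat} (p : {mpoly F[k]}) : {poly F} :=
  mmap (@polyC F) (fun _ => 'X) p.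

HB.instance Definition _ k := GRing.RMorphism.copy (@collapse k)
  (mmap (@polyC F) (fun _ : 'I_k => 'X)).

Lemma collapseX k (i : 'I_k) : collapse 'X_i = 'X.
Proof. by rewrite /collapse mmapX mmap1U. Qed.

Lemma collapseC k (c : F) : collapse (c%:MP : {mpoly F[k]}) = c%:P.
Proof. by rewrite /collapse mmapC. Qed.

Lemma collapse_proj_substX k m (a : 'I_m -> 'I_k + F) (i : 'I_m) :
  collapse ('X_i \mPo proj_subst a) = 'X \/
  exists c, collapse ('X_i \mPo proj_subst a) = c%:P.
Proof.
rewrite comp_mpolyXU -tnth_nth tnth_mktuple.
case: (a i) => [j|c]; first by left; rewrite collapseX.
by right; exists c; rewrite collapseC.
Qed.

End VariableCollapse.

Lemma rmorph_sqr_mul_addr_sqr (R S : comNzRingType) (f : {rmorphism R -> S})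
    (z w : R) :
  f (z ^+ 2 * (w + w ^+ 2)) = f z ^+ 2 * (f w + f w ^+ 2).
Proof. by rewrite rmorphM rmorphD !rmorphXn. Qed.

Section UnivariateShape.
Variable F : fieldType.

Lemma size_addr_sqr_neq2 (w : {poly F}) : size (w + w ^+ 2) != 2%N.
Proof.
have [w_const|w_nconst] := leqP (size w) 1.
  by rewrite [w]size1_polyC // -polyC_exp -polyCD size_polyC; case: (_ != 0).
have w_neq0 : w != 0 by rewrite -size_poly_gt0 ltnW.
have size_w2 : size (w ^+ 2) = ((size w).-1 * 2).+1.
  by rewrite -(size_exp w 2) prednK // size_poly_gt0 expf_neq0.
rewrite addrC size_polyDl size_w2; case: (size w) w_nconst => [|[|d]] //= _.
by rewrite ltnS muln2 -addnn addnS ltnS leq_addr.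
Qed.

Lemma X_neq_sqr_mul_addr_sqr (Z w : {poly F}) :
  (Z = 'X \/ exists c, Z = c%:P) -> 'X != Z ^+ 2 * (w + w ^+ 2).
Proof.
move=> [->|[c ->]]; apply/eqP.
  move=> /(congr1 (fun p : {poly F} => p`_1)) /eqP.
  by rewrite coefXnM /= coefX oner_eq0.
have [-> | c_neq0] := eqVneq c 0.
  by rewrite expr0n mul0r => /eqP; rewrite polyX_eq0.
move=> /(congr1 (size : {poly F} -> nat)) /eqP.
rewrite -polyC_exp size_Cmul ?expf_neq0 // size_polyX eq_sym.
exact/negP/size_addr_sqr_neq2.
Qed.

End UnivariateShape.

Lemma ncycle1 (s : 'S_1) : ncycle s.
Proof.
apply/forallP => x; apply/eqP/setP => y.
by rewrite inE (ord1 y) -(ord1 x) porbit_id.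
Qed.

Lemma HC_poly1 (F : fieldType) : HC_poly F 1 = 'X_(mxvec_index ord0 ord0).
Proof.
rewrite /HC_poly (eq_bigl xpredT) => [|s]; last exact: ncycle1.
rewrite (eq_bigr (fun _ => 'X_(mxvec_index ord0 ord0))) => [|s _].
  by rewrite sumr_const card_Sn.
by rewrite big_ord1 (ord1 (s ord0)).
Qed.

Theorem lemma3 (F : fieldType) : ~ VNPC (Pfam F).
Proof.
move=> [_ [t [_ reduces_HC]]].
have [a HC1] := reduces_HC 1%N.
move: HC1 => /= /(congr1 (@collapse F _)) /eqP.
rewrite HC_poly1 collapseX /P_poly -exprMn.
rewrite rmorph_sqr_mul_addr_sqr (@rmorph_sqr_mul_addr_sqr _ _ (@collapse F _)).
apply/negP/X_neq_sqr_mul_addr_sqr.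
exact: collapse_proj_substX.
Qed.
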